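(* Let $S$ and $Z$ be finite nonempty alphabets with $\#Z\le\#S$, let $\tau:S\to Z$ be surjective, and let $(\Sigma,\sigma_\tau)$ be the associated full zip shift space. Then $\sigma_\tau$ is an expansive local homeomorphism.
   Context: The zip shift space is $\Sigma=\Sigma_{Z,S}$, the set of bi-infinite sequences $x=(x_i)_{i\in\mathbb{Z}}$ with $x_i\in S$ for $i\ge 0$ and $x_i\in Z$ for $i<0$, with metric $d(x,y)=2^{-M(x,y)}$, $M(x,y)=\min\{|i|: x_i\ne y_i\}$. The zip shift map $\sigma_\tau:\Sigma\to\Sigma$ is given by $(\sigma_\tau x)_i=x_{i+1}$ for $i\ne -1$ and $(\sigma_\tau x)_{-1}=\tau(x_0)$. A continuous map (local homeomorphism) $f:X\to X$ of a compact metric space $(X,d)$ is called expansive with expansivity constant $e>0$ if for any $x\neq y$ in $X$ there exists $n\in\mathbb{Z}$ such that $d(f^n(x),f^n(y))>e$, where for $n<0$, $f^n(x)$ and $f^n(y)$ denote the sets of $|n|$-th preimages and $d$ is taken as the minimum distance between these sets. *)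

From HB Require Import structures.
From mathcomp Require Import all_boot all_order all_algebra.
From mathcomp Require Import boolp classical_sets reals Rstruct.
Set Implicit Arguments. Unset Strict Implicit. Unset Printing Implicit Defensive.
Import Order.TTheory GRing.Theory Num.Theory.
Local Open Scope ring_scope.
Local Open Scope classical_set_scope.

Notation Real := Rdefinitions.R.

Section Generic.
Variable T : Type.
Variable d : T -> T -> Real.

Definition dball (x : T) (r : Real) : set T := [set y | d x y < r].

Definition dopen (U : set T) : Prop :=
  forall x, U x -> exists2 r : Real, 0 < r & dball x r `<=` U.

Definition dcontinuous_on (g : T -> T) (A : set T) : Prop :=
  forall x, A x -> forall eps : Real, 0 < eps ->
    exists2 del : Real, 0 < del &
      forall y, A y -> d x y < del -> d (g x) (g y) < eps.

Definition local_homeomorphism (f : T -> T) : Prop :=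
  forall x, exists U : set T,
    [/\ dopen U, U x, dopen (f @` U),
        (forall u v, U u -> U v -> f u = f v -> u = v) /\ dcontinuous_on f U &
        exists g : T -> T,
          [/\ forall u, U u -> g (f u) = u,
              forall y, (f @` U) y -> U (g y) /\ f (g y) = y &
              dcontinuous_on g (f @` U)]].

Definition preimages (f : T -> T) (k : nat) (x : T) : set T :=
  [set z | iter k f z = x].

Definition setdist (A B : set T) : Real :=
  inf [set r | exists a b, [/\ A a, B b & r = d a b]].

(* "d(f^n x, f^n y)" for n in Z; for n < 0 the sets of |n|-th preimages *)
Definition iter_dist (f : T -> T) (n : int) (x y : T) : Real :=
  match n with
  | Posz k => d (iter k f x) (iter k f y)
  | Negz k => setdist (preimages f k.+1 x) (preimages f k.+1 y)
  end.

Definition expansive (f : T -> T) : Prop :=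
  exists2 e : Real, 0 < e &
    forall x y, x <> y -> exists n : int, iter_dist f n x y > e.
End Generic.

(* A point x = (x_i)_{i in Z} is stored as zpos i = x_i (i >= 0, in S) and
   zneg j = x_{-(j+1)} (in Z). *)
Record zipseq (S Z : Type) := Zip { zpos : nat -> S; zneg : nat -> Z }.

Section Zip.
Variables S Z : finType.

Definition zcoord (x : zipseq S Z) (i : int) : S + Z :=
  match i with
  | Posz k => inl (zpos x k)
  | Negz k => inr (zneg x k)
  end.

Definition zdiffer (x y : zipseq S Z) (m : nat) : bool :=
  (zcoord x (Posz m) != zcoord y (Posz m)) || (zcoord x (- Posz m) != zcoord y (- Posz m)).

(* d(x,y) = 2^(-M(x,y)),  M(x,y) = min {|i| : x_i <> y_i};  d(x,x) = 0 *)
Definition zdist (x y : zipseq S Z) : Real :=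
  match pselect (exists m, zdiffer x y m) with
  | left h => (2 : Real) ^- (ex_minn h)
  | right _ => 0
  end.

Definition zshift (tau : S -> Z) (x : zipseq S Z) : zipseq S Z :=
  Zip (fun i => zpos x i.+1)
      (fun j => match j with 0 => tau (zpos x 0) | j'.+1 => zneg x j' end).
End Zip.

(** Two points at distance [< 2^-(n+1)] agree on all coordinates [|i| <= n+1],
    so their shifts agree on [|i| <= n]: the shift and its local inverse
    (prepending a symbol) are uniformly continuous, and on the cylinder
    [x_0 = s] the shift is a bijection onto the cylinder [x_-1 = tau s].
    For expansivity with constant [1/2]: if [x_i <> y_i] with [i >= 0], then
    [sigma^i x] and [sigma^i y] differ at coordinate [0], so they are at
    distance [1]; if [x_-(j+1) <> y_-(j+1)], then every [(j+1)]-th preimage [a]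
    of [x] has [x_-(j+1) = tau(a_0)], so any two preimages of [x] and [y]
    differ at coordinate [0], and the (nonempty, by surjectivity of [tau])
    sets of preimages are at distance [1]. *)
From HB Require Import structures.
From mathcomp Require Import all_boot all_order all_algebra.
From mathcomp Require Import boolp classical_sets reals Rstruct.
Import Order.TTheory GRing.Theory Num.Theory.
Set Implicit Arguments. Unset Strict Implicit. Unset Printing Implicit Defensive.

Local Open Scope ring_scope.
Local Open Scope classical_set_scope.

Section InversePowersOfTwo.
Variable R : archiRealFieldType.

Lemma pow2V_gt0 (n : nat) : 0 < (2 : R) ^- n.
Proof. by rewrite invr_gt0 exprn_gt0. Qed.

Lemma pow2V_le (m n : nat) : (m <= n)%N -> (2 : R) ^- n <= 2 ^- m.
Proof. by move=> mn; rewrite lef_pV2 ?posrE ?exprn_gt0 // ler_eXn2l ?ltr1n. Qed.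

Lemma pow2V_lt (m n : nat) : (m < n)%N -> (2 : R) ^- n < 2 ^- m.
Proof. by move=> mn; rewrite ltf_pV2 ?posrE ?exprn_gt0 // ltr_eXn2l ?ltr1n. Qed.

Lemma exists_pow2V_lt (eps : R) : 0 < eps -> exists n : nat, (2 : R) ^- n < eps.
Proof.
move=> eps_gt0; pose n := Num.Def.archi_bound eps^-1.
have epsV_lt_n : eps^-1 < n%:R by apply: archi_boundP; rewrite invr_ge0 ltW.
have n_lt_pow2 : n%:R < (2 : R) ^+ n by rewrite -natrX ltr_nat ltn_expl.
exists n; rewrite -[eps]invrK ltf_pV2 ?posrE ?exprn_gt0 ?invr_gt0 //.
exact: lt_trans n_lt_pow2.
Qed.
End InversePowersOfTwo.

Lemma setdist_const (T : Type) (d : T -> T -> Rdefinitions.R) (A B : set T)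
    (r : Rdefinitions.R) :
  A !=set0 -> B !=set0 -> (forall a b, A a -> B b -> d a b = r) ->
  setdist d A B = r.
Proof.
move=> [a Aa] [b Bb] dAB; rewrite /setdist.
suff -> : [set t | exists a b, [/\ A a, B b & t = d a b]] = [set r] by rewrite inf1.
apply/seteqP; split => [_ [a' [b' [Aa' Bb' ->]]]|_ ->]; first exact: dAB.
by exists a, b; rewrite dAB.
Qed.

Section ZipShiftSpace.
Variables S Z : finType.
Implicit Types x y u v w : zipseq S Z.

Local Notation zdist := (@zdist S Z).

Lemma zipseq_ext x y : zpos x =1 zpos y -> zneg x =1 zneg y -> x = y.
Proof. by case: x y => [p1 n1] [p2 n2] /= /funext-> /funext->. Qed.

Lemma zipseq_neqP x y :
  x <> y -> (exists i, zpos x i <> zpos y i) \/ (exists j, zneg x j <> zneg y j).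
Proof.
move=> xy; apply: contrapT => /not_orP[/forallNP samepos /forallNP sameneg].
by apply: xy; apply: zipseq_ext => i; apply: contrapT.
Qed.

(* [x_i = y_i] for [|i| <= n]; [zneg] is shifted by one, hence [j < n]. *)
Definition agree (n : nat) x y := forall m, (m <= n)%N -> ~~ zdiffer x y m.

Lemma agreeP n x y : agree n x y <->
  (forall i, (i <= n)%N -> zpos x i = zpos y i) /\
  (forall j, (j < n)%N -> zneg x j = zneg y j).
Proof.
rewrite /agree /zdiffer; split.
- move=> xy; split => [i /xy|j /xy] /=; rewrite negb_or.
    by case/andP => /negPn/eqP[].
  by case/andP => _ /negPn/eqP[].
- move=> [pos_eq neg_eq] [|m] m_le /=; first by rewrite pos_eq ?eqxx.
  by rewrite pos_eq ?neg_eq ?eqxx.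
Qed.

Lemma zdist_lt_agree n x y : agree n x y -> zdist x y < 2 ^- n.
Proof.
move=> xy; rewrite /zdist; case: pselect => [ex|_]; last exact: pow2V_gt0.
case: ex_minnP => m xy_m _; apply: pow2V_lt; rewrite ltnNge.
by apply: contraL xy_m => /xy.
Qed.

Lemma agree_zdist_lt n x y : zdist x y < 2 ^- n -> agree n x y.
Proof.
rewrite /zdist => dxy m m_le; apply/negP => xy_m; move: dxy.
case: pselect => [ex|nex]; last by case: nex; exists m.
case: ex_minnP => k _ /(_ m xy_m) k_le.
by rewrite ltNge pow2V_le // (leq_trans k_le).
Qed.

Lemma zdist_zpos0 x y : zpos x 0 <> zpos y 0 -> zdist x y = 1.
Proof.
move=> xy0; have xy_0 : zdiffer x y 0 by apply/orP; left; apply/eqP => -[].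
rewrite /zdist; case: pselect => [ex|nex]; last by case: nex; exists 0%N.
case: ex_minnP => k _ /(_ 0%N xy_0); rewrite leqn0 => /eqP->.
by rewrite expr0 invr1.
Qed.

Lemma dopen_agree_closed n (U : set (zipseq S Z)) :
  (forall u v, U u -> agree n u v -> U v) -> dopen zdist U.
Proof.
move=> Uclosed u Uu; exists (2 ^- n) => [|v /agree_zdist_lt]; first exact: pow2V_gt0.
exact: Uclosed.
Qed.

Lemma dcontinuous_on_agree (h : zipseq S Z -> zipseq S Z) (A : set (zipseq S Z)) :
  (forall n x y, A x -> A y -> agree n.+1 x y -> agree n (h x) (h y)) ->
  dcontinuous_on zdist h A.
Proof.
move=> h_agree x Ax eps /exists_pow2V_lt[n n_lt].
exists (2 ^- n.+1) => [|y Ay /agree_zdist_lt xy]; first exact: pow2V_gt0.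
exact/(lt_trans _ n_lt)/zdist_lt_agree/h_agree.
Qed.

Variable tau : S -> Z.

Local Notation sigma := (zshift tau).

Definition zunshift (s : S) w : zipseq S Z :=
  Zip (fun i => if i is i'.+1 then zpos w i' else s) (fun j => zneg w j.+1).

Lemma zshiftK u : zunshift (zpos u 0) (sigma u) = u.
Proof. by apply: zipseq_ext => -[]. Qed.

Lemma zunshiftK s w : zneg w 0 = tau s -> sigma (zunshift s w) = w.
Proof. by move=> w0; apply: zipseq_ext => -[]. Qed.

Lemma zshift_agree n x y : agree n.+1 x y -> agree n (sigma x) (sigma y).
Proof.
move/agreeP => [pos_eq neg_eq]; apply/agreeP; split => [i i_le|[|j] j_lt] /=.
- exact: (pos_eq i.+1).
- by rewrite pos_eq.
- exact: neg_eq (ltnW (ltnW j_lt)).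
Qed.

Lemma zunshift_agree s n x y : agree n.+1 x y -> agree n (zunshift s x) (zunshift s y).
Proof.
move/agreeP => [pos_eq neg_eq]; apply/agreeP; split => [[|i] i_le|j j_lt] //=.
- exact: pos_eq (leqW (ltnW i_le)).
- exact: neg_eq.
Qed.

Lemma image_zshift_cylinder s :
  sigma @` [set u | zpos u 0 = s] = [set w | zneg w 0 = tau s].
Proof.
apply/seteqP; split => [_ [u /= u0 <-]|w /= w0]; first by rewrite /= u0.
by exists (zunshift s w); last exact: zunshiftK.
Qed.

Lemma zshift_local_homeomorphism : local_homeomorphism zdist sigma.
Proof.
move=> x; set s := zpos x 0; exists [set u | zpos u 0 = s].
have unshift_shift u : zpos u 0 = s -> zunshift s (sigma u) = u.
  by move=> <-; exact: zshiftK.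
rewrite image_zshift_cylinder; split => //.
- apply: (@dopen_agree_closed 0) => u v /= <- /agreeP[pos_eq _].
  by rewrite pos_eq.
- apply: (@dopen_agree_closed 1) => u v /= <- /agreeP[_ neg_eq].
  by rewrite neg_eq.
- split; last by apply: dcontinuous_on_agree => *; exact: zshift_agree.
  by move=> u v Uu Uv uv; rewrite -(unshift_shift u) // uv unshift_shift.
- exists (zunshift s); split => //; first by move=> w /= /zunshiftK.
  by apply: dcontinuous_on_agree => *; exact: zunshift_agree.
Qed.

Lemma zpos_iter k x i : zpos (iter k sigma x) i = zpos x (i + k).
Proof. by elim: k i => [|k IH] i /=; rewrite ?addn0 // IH addnS. Qed.

Lemma zneg_iter k a : zneg (iter k.+1 sigma a) k = tau (zpos a 0).
Proof. by elim: k. Qed.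

Lemma iter_dist_zshift_eq1 x y :
  (forall k, preimages sigma k x !=set0) -> (forall k, preimages sigma k y !=set0) ->
  x <> y -> exists n, iter_dist zdist sigma n x y = 1.
Proof.
move=> x_pre y_pre /zipseq_neqP[[i xy_i]|[j xy_j]].
  by exists (Posz i); rewrite /= zdist_zpos0 // !zpos_iter.
exists (Negz j); apply: setdist_const => // a b xa yb.
by apply: zdist_zpos0 => ab0; apply: xy_j; rewrite -xa -yb !zneg_iter ab0.
Qed.

Hypothesis tau_surj : forall z : Z, exists s : S, tau s = z.

Lemma preimages_zshift_neq0 k x : preimages sigma k x !=set0.
Proof.
elim: k x => [|k IH] x; first by exists x.
have [s s_tau] := tau_surj (zneg x 0).
have [a a_pre] := IH (zunshift s x).
by exists a; rewrite /preimages /= a_pre zunshiftK.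
Qed.

Lemma zshift_expansive : expansive zdist sigma.
Proof.
exists (2 ^- 1); first exact: pow2V_gt0.
move=> x y /(iter_dist_zshift_eq1 (preimages_zshift_neq0^~ x) (preimages_zshift_neq0^~ y)).
by move=> [n dist_eq1]; exists n; rewrite dist_eq1 expr1 invf_lt1 // ltr1n.
Qed.

End ZipShiftSpace.

Theorem proposition1 (S Z : finType) (tau : S -> Z) :
  (0 < #|S|)%N -> (0 < #|Z|)%N -> (#|Z| <= #|S|)%N ->
  (forall z : Z, exists s : S, tau s = z) ->
  local_homeomorphism (@zdist S Z) (zshift tau) /\
  expansive (@zdist S Z) (zshift tau).
Proof.
move=> _ _ _ tau_surj; split; first exact: zshift_local_homeomorphism.
exact: zshift_expansive.
Qed.
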